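(* Let $D$ and $X$ be finite sets and $w \colon \overline{D^X}\to\mathbb{R}$ a $(D,X)$-ranking function. Then $w$ is subset-monotone if and only if the following holds: for all partial assignments $\tau_1,\tau_2,\sigma_1,\sigma_2$ such that $\tau_i$ is disjoint from $\sigma_i$ for each $i\in\{1,2\}$, if $w(\tau_1)\le w(\tau_2)$ and $w(\sigma_1)\le w(\sigma_2)$, then $w(\tau_1\times\sigma_1)\le w(\tau_2\times\sigma_2)$.
   Context: A partial assignment on domain $D$ and variables $Y \subseteq X$ is a map $Y \to D\cup\{\bot\}$ ($\bot$ = undefined); $\overline{D^Y}$ is the set of these. Two partial assignments $\tau\in\overline{D^Y}$, $\sigma\in\overline{D^Z}$ are disjoint if $Y\cap Z=\emptyset$, and then $\tau\times\sigma\in\overline{D^{Y\cup Z}}$ agrees with $\tau$ on $Y$ and $\sigma$ on $Z$. A $(D,X)$-ranking function is any function $w\colon\overline{D^X}\to\mathbb{R}$; for $\tau \in \overline{D^Y}$ with $Y\subseteq X$, $w(\tau)$ denotes $w$ of the extension of $\tau$ assigning $\bot$ to all variables in $X\setminus Y$. $w$ is subset-monotone if for every $Y\subseteq X$, all $\tau_1,\tau_2\in\overline{D^Y}$ with $w(\tau_1)\le w(\tau_2)$, and all $\sigma\in\overline{D^{X\setminus Y}}$, we have $w(\sigma\times\tau_1)\le w(\sigma\times\tau_2)$. In the stated condition, $\tau_1,\tau_2$ (resp.\ $\sigma_1, \sigma_2$) are understood to range over partial assignments on a common variable set $Y$ (resp.\ $Z$) with $Y \cap Z = \emptyset$ and $Y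 \cup Z \subseteq X$. *)

From mathcomp Require Import all_boot.
From Stdlib Require Import Reals.
Set Implicit Arguments. Unset Strict Implicit. Unset Printing Implicit Defensive.

(* A total assignment with undefined values: an element of \bar{D^X},
   i.e. a map X -> D ∪ {⊥}, with ⊥ = None. *)
Definition passign (D X : finType) := {ffun X -> option D}.

(* A partial assignment tau ∈ \bar{D^Y} (Y ⊆ X) is represented by its
   extension to X that assigns ⊥ (None) to every variable outside Y.
   This is a bijection between \bar{D^Y} and the f satisfying [pa_on Y f]. *)
Definition pa_on (D X : finType) (Y : {set X}) (f : passign D X) : Prop :=
  forall x, x \notin Y -> f x = None.

(* Product tau × sigma of tau ∈ \bar{D^Y} and sigma ∈ \bar{D^Z}, Y ∩ Z = ∅:
   agrees with tau on Y and with sigma elsewhere (in particular on Z). *)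
Definition pa_prod (D X : finType) (Y : {set X}) (tau sigma : passign D X)
  : passign D X := [ffun x => if x \in Y then tau x else sigma x].

(* Subset-monotonicity of a ranking function w : \bar{D^X} -> R.
   For sigma ∈ \bar{D^{X\Y}} and tau ∈ \bar{D^Y}, sigma × tau agrees with tau on Y. *)
Definition subset_monotone (D X : finType) (w : passign D X -> R) : Prop :=
  forall (Y : {set X}) (tau1 tau2 sigma : passign D X),
    pa_on Y tau1 -> pa_on Y tau2 -> pa_on (~: Y) sigma ->
    (w tau1 <= w tau2)%R ->
    (w (pa_prod Y tau1 sigma) <= w (pa_prod Y tau2 sigma))%R.

From mathcomp Require Import all_boot.
From Stdlib Require Import Reals.
Set Implicit Arguments. Unset Strict Implicit. Unset Printing Implicit Defensive.

(* Subset-monotonicity changes one factor of a product at a time; since the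
   product over Y is the product over ~: Y with the factors swapped, changing
   first the Y-factor and then the (~: Y)-factor yields the two-sided rule.
   Conversely, subset-monotonicity is the two-sided rule with Z := ~: Y and
   sigma1 = sigma2. *)

Lemma pa_on_sub (D X : finType) (Y Z : {set X}) (f : passign D X) :
  Y \subset Z -> pa_on Y f -> pa_on Z f.
Proof. by move=> sYZ fY x xZ; apply: fY; apply: contra xZ; apply: (subsetP sYZ). Qed.

Lemma pa_on_setCK (D X : finType) (Y : {set X}) (f : passign D X) :
  pa_on Y f -> pa_on (~: ~: Y) f.
Proof. by rewrite setCK. Qed.

Lemma pa_prod_setC (D X : finType) (Y : {set X}) (tau sigma : passign D X) :
  pa_prod Y tau sigma = pa_prod (~: Y) sigma tau.
Proof. by apply/ffunP => x; rewrite !ffunE in_setC; case: (x \in Y). Qed.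

Theorem lemmaA1 (D X : finType) (w : passign D X -> R) :
  subset_monotone w <->
  (forall (Y Z : {set X}) (tau1 tau2 sigma1 sigma2 : passign D X),
     [disjoint Y & Z] ->
     pa_on Y tau1 -> pa_on Y tau2 -> pa_on Z sigma1 -> pa_on Z sigma2 ->
     (w tau1 <= w tau2)%R -> (w sigma1 <= w sigma2)%R ->
     (w (pa_prod Y tau1 sigma1) <= w (pa_prod Y tau2 sigma2))%R).
Proof.
split=> [monw Y Z tau1 tau2 sigma1 sigma2 dYZ tau1Y tau2Y sigma1Z sigma2Z
         le_tau le_sigma | prodw Y tau1 tau2 sigma tau1Y tau2Y sigmaCY le_tau].
- have sZCY : Z \subset ~: Y by rewrite -disjoints_subset disjoint_sym.
  apply: Rle_trans (monw Y _ _ sigma1 tau1Y tau2Y _ le_tau) _.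
    exact: pa_on_sub sigma1Z.
  rewrite !(pa_prod_setC Y tau2); apply: monw => //.
  + exact: pa_on_sub sigma1Z.
  + exact: pa_on_sub sigma2Z.
  + exact: pa_on_setCK.
- apply: (prodw Y (~: Y)) => //; last exact: Rle_refl.
  by rewrite -subsets_disjoint.
Qed.
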